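(* Let $\mathcal C$ be a concept hierarchy, $r_1,r_2,\epsilon\in[0,1]$ with $r_1\le r_2(1-\epsilon)$, $m$ a positive integer, and let $\mathcal H$ be the network defined below with a fixed failed set $F$ satisfying the stated constraint. Then for every $B\subseteq C_0$ presented at time 0 and every concept $c$ with $c\notin supp_{r_1}(B)$, no neuron $v\in reps(c)$ fires at time $level(c)$.
   Context: Concept hierarchies: fix positive integers $\ell_{max},n,k$. A universal set $D$ of concepts is partitioned into disjoint sets $D_0,\dots,D_{\ell_{max}}$ with $|D_0|=n$; $level(c)=\ell$ for $c\in D_\ell$. A concept hierarchy $\mathcal C$ consists of $C\subseteq D$, with $C_\ell=C\cap D_\ell$, and for each $c\in C_\ell$ with $1\le\ell\le\ell_{max}$ a set $children(c)\subseteq C_{\ell-1}$, such that $|C_{\ell_{max}}|=k$, $|children(c)|=k$ for all such $c$, and $children(c)\cap children(c')=\emptyset$ for distinct $c,c'\in C_\ell$. For $B\subseteq D_0$ and $r\in[0,1]$: $B(0)=B\cap C_0$; for $1\le\ell\le\ell_{max}$, $B(\ell)=\{c\in C_\ell:|children(c)\cap B(\ell-1)|\ge rk\}$; $supp_r(B)=\bigcup_{\ell}B(\ell)$. Network $\mathcal H$: neurons partitioned into layers $N_0,\dots,N_{\ell_{max}}$. Each $c\in D_0$ has a set $reps(c)$ of $m$ neurons in $N_0$, each $c\in C$ with $level(c)\ge1$ a set $reps(c)$ of $m$ neurons in $N_{level(c)}$, all pairwise disjoint. For $u\in N_{\ell-1}$, $v\in N_\ell$: $w(u,v)=1$ iff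 $v\in reps(c)$ and $u\in reps(c')$ for a child $c'$ of $c$, else $0$. Threshold $\tau=r_2km(1-\epsilon)$. A fixed set $F$ of neurons is failed (failed neurons never fire), such that for every concept $c$ at least $m(1-\epsilon)$ neurons of $reps(c)$ are not in $F$. Input $B\subseteq C_0$ presented at time 0: a layer-0 neuron fires at time 0 iff it is in $\bigcup_{b\in B}reps(b)\setminus F$, and no layer-0 neuron fires at any other time. A non-failed $v\in N_\ell$, $\ell\ge1$, does not fire at time 0 and fires at time $t\ge1$ iff $\sum_{u\in N_{\ell-1}}w(u,v)x_u(t-1)\ge\tau$, where $x_u(s)\in\{0,1\}$ indicates whether $u$ fires at time $s$. *)

From mathcomp Require Import all_boot all_order all_algebra.
From mathcomp Require Import reals.
Import Order.TTheory GRing.Theory Num.Theory.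
Local Open Scope ring_scope.
Set Implicit Arguments.
Unset Strict Implicit.
Unset Printing Implicit Defensive.

Section Hierarchy.
Variables (D : finType) (level : D -> nat).

Definition Dlev (l : nat) : {set D} := [set c | level c == l].

(* C is a concept hierarchy with parameters lmax, n, k (children only
   meaningful for c in C with 1 <= level c <= lmax). *)
Definition concept_hierarchy (lmax n k : nat) (C : {set D})
  (children : D -> {set D}) : Prop :=
  [/\ (forall c : D, (level c <= lmax)%N),
      #|Dlev 0| = n,
      #|C :&: Dlev lmax| = k,
      (forall c, c \in C -> (1 <= level c <= lmax)%N ->
          [/\ children c \subset C :&: Dlev (level c).-1 & #|children c| = k])
    & (forall c c', c \in C -> c' \in C -> (1 <= level c <= lmax)%N ->
          level c' = level c -> c != c' ->
          [disjoint children c & children c'])].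

Fixpoint Blev (R : realType) (k : nat) (C : {set D}) (children : D -> {set D})
  (r : R) (B : {set D}) (l : nat) : {set D} :=
  match l with
  | 0 => B :&: (C :&: Dlev 0)
  | l'.+1 => [set c in C :&: Dlev l'.+1 |
               r * k%:R <= #|children c :&: @Blev R k C children r B l'|%:R]
  end.

Definition supp (R : realType) (lmax k : nat) (C : {set D})
  (children : D -> {set D}) (r : R) (B : {set D}) : {set D} :=
  \bigcup_(l < lmax.+1) @Blev R k C children r B l.

Definition has_reps (C : {set D}) (c : D) : bool := (level c == 0)%N || (c \in C).

Variables (N : finType) (layer : N -> nat).

Definition network_ok (lmax m : nat) (C : {set D}) (reps : D -> {set N}) : Prop :=
  [/\ (forall u : N, (layer u <= lmax)%N),
      (forall c, has_reps C c -> #|reps c| = m),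
      (forall c, has_reps C c -> forall u, u \in reps c -> layer u = level c)
    & (forall c c', has_reps C c -> has_reps C c' -> c != c' ->
          [disjoint reps c & reps c'])].

Definition weight (lmax : nat) (C : {set D}) (children : D -> {set D})
  (reps : D -> {set N}) (u v : N) : bool :=
  [exists c, [&& c \in C, (1 <= level c <= lmax)%N, v \in reps c &
                 [exists c', (c' \in children c) && (u \in reps c')]]].

Definition failure_ok (R : realType) (m : nat) (eps : R) (C : {set D})
  (reps : D -> {set N}) (F : {set N}) : Prop :=
  forall c, has_reps C c -> m%:R * (1 - eps) <= #|reps c :\: F|%:R.

Definition tau (R : realType) (k m : nat) (r2 eps : R) : R :=
  r2 * k%:R * m%:R * (1 - eps).

Fixpoint fires (R : realType) (lmax k m : nat) (C : {set D})
  (children : D -> {set D}) (reps : D -> {set N}) (F : {set N})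
  (r2 eps : R) (B : {set D}) (t : nat) (v : N) : bool :=
  match t with
  | 0 => [&& layer v == 0%N, v \in \bigcup_(b in B) reps b & v \notin F]
  | t'.+1 => [&& (1 <= layer v)%N, v \notin F &
              @tau R k m r2 eps <=
                \sum_(u : N | layer u == (layer v).-1)
                   (weight lmax C children reps u v)%:R *
                   (@fires R lmax k m C children reps F r2 eps B t' u)%:R]
  end.

End Hierarchy.

(* A neuron of reps c can fire at time level c only if c is in B(level c); this
   is proved by induction on the level.  At level 0 the firing neurons are
   exactly the surviving reps of the inputs.  At level l+1 a neuron of reps c
   only receives edges from reps of children of c, and by induction only reps
   of children in B(l) fire at time l.  If c is not in B(l+1), fewer than r1 k
   children are in B(l), so fewer than r1 k m <= r2 (1 - eps) k m = tau inputs
   are active. *)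
From mathcomp Require Import all_boot all_order all_algebra.
From mathcomp Require Import reals.
Import Order.TTheory GRing.Theory Num.Theory.
Set Implicit Arguments.
Unset Strict Implicit.
Unset Printing Implicit Defensive.
Local Open Scope ring_scope.

Lemma card_bigcup_le (I T : finType) (P : pred I) (A : I -> {set T}) :
  (#|\bigcup_(i | P i) A i| <= \sum_(i | P i) #|A i|)%N.
Proof.
elim/big_rec2: _ => [|i S n _ IH]; first by rewrite cards0.
by rewrite (leq_trans (leq_card_setU _ _)) ?leq_add2l.
Qed.

Lemma sum_bool_mul_le_card (R : numDomainType) (T : finType) (P a b : pred T) :
  \sum_(u | P u) (a u)%:R * (b u)%:R <= #|[set u | a u && b u]|%:R :> R.
Proof.
under eq_bigr do rewrite -natrM mulnb.
rewrite -natr_sum ler_nat -sum1_card big_mkcond /=.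
rewrite [X in (_ <= X)%N]big_mkcond /=.
apply: leq_sum => u _; rewrite inE.
by case: (P u); case: (a u && b u).
Qed.

Lemma threshold_ratio (R : realType) (k m x : nat) (r1 r2 eps : R) :
  r1 <= r2 * (1 - eps) -> (0 < m)%N -> tau k m r2 eps <= (x * m)%:R ->
  r1 * k%:R <= x%:R.
Proof.
move=> r1_le m_gt0 tau_le; rewrite -(@ler_pM2r _ m%:R) ?ltr0n // -natrM.
apply: le_trans tau_le; rewrite /tau [r2 * _ * _ * _]mulrAC [r2 * _ * (1 - eps)]mulrAC.
by rewrite !ler_wpM2r ?ler0n.
Qed.

Lemma Blev_sub_supp (R : realType) (D : finType) (level : D -> nat) (lmax k : nat)
    (C : {set D}) (children : D -> {set D}) (r : R) (B : {set D}) (l : nat) :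
  (l <= lmax)%N -> Blev level k C children r B l \subset supp level lmax k C children r B.
Proof. by move=> l_le; rewrite /supp (bigcup_sup (Ordinal (n := lmax.+1) l_le)). Qed.

Section Soundness.
Variables (R : realType) (D : finType) (level : D -> nat) (C : {set D}).
Variables (children : D -> {set D}) (N : finType) (layer : N -> nat).
Variables (reps : D -> {set N}) (F : {set N}) (lmax k m : nat).
Variables (r1 r2 eps : R) (B : {set D}).

Local Notation has_reps := (has_reps level C).
Local Notation weight := (weight level lmax C children reps).
Local Notation fire := (fires level layer lmax k m C children reps F r2 eps B).
Local Notation Bl := (Blev level k C children r1 B).

Hypothesis level_le_lmax : forall c, (level c <= lmax)%N.
Hypothesis children_sub : forall c, c \in C -> (1 <= level c <= lmax)%N ->
  children c \subset C :&: Dlev level (level c).-1.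
Hypothesis card_reps : forall c, has_reps c -> #|reps c| = m.
Hypothesis reps_disjoint : forall c c', has_reps c -> has_reps c' -> c != c' ->
  [disjoint reps c & reps c'].
Hypothesis B_sub : B \subset C :&: Dlev level 0.
Hypothesis m_gt0 : (0 < m)%N.
Hypothesis r1_le : r1 <= r2 * (1 - eps).

Lemma reps_inj c c' v : has_reps c -> has_reps c' ->
  v \in reps c -> v \in reps c' -> c = c'.
Proof.
move=> hc hc' vc vc'; apply/eqP/negPn/negP.
by move=> /(reps_disjoint hc hc')/disjointFr/(_ vc); rewrite vc'.
Qed.

Lemma weight_child_rep c u v : has_reps c -> v \in reps c -> weight u v ->
  exists2 c', c' \in children c & u \in reps c'.
Proof.
move=> hc vc /existsP[c0 /and4P[c0C _ vc0 /existsP[c' /andP[c'c0 uc']]]].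
have hc0 : has_reps c0 by rewrite /has_reps c0C orbT.
by rewrite (reps_inj hc hc0 vc vc0); exists c'.
Qed.

Lemma children_in_level c l : has_reps c -> level c = l.+1 ->
  c \in C /\ {in children c, forall c', has_reps c' /\ level c' = l}.
Proof.
rewrite /has_reps => /orP[/eqP-> //|cC] lc; split=> // c'.
have lvl : (1 <= level c <= lmax)%N by rewrite level_le_lmax lc.
move/(subsetP (children_sub cC lvl)); rewrite lc !inE.
by case/andP=> -> /eqP->; rewrite orbT.
Qed.

Lemma fires0_Blev0 c v : has_reps c -> v \in reps c -> fire 0 v -> c \in Bl 0.
Proof.
move=> hc vc /and3P[_ /bigcupP[b bB vb] _].
have bC0 := subsetP B_sub b bB.
have hb : has_reps b by move: bC0; rewrite !inE /has_reps => /andP[_ ->].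
by rewrite /= (reps_inj hc hb vc vb) inE bB bC0.
Qed.

Lemma card_active_inputs l c v :
  (forall c' u, has_reps c' -> level c' = l -> u \in reps c' -> fire l u -> c' \in Bl l) ->
  has_reps c -> level c = l.+1 -> v \in reps c ->
  (#|[set u | weight u v && fire l u]| <= #|children c :&: Bl l| * m)%N.
Proof.
move=> sound_l hc lc vc; have [_ hch] := children_in_level hc lc.
apply: (@leq_trans #|\bigcup_(c' in children c :&: Bl l) reps c'|).
  apply/subset_leq_card/subsetP => u; rewrite inE => /andP[wuv fu].
  have [c' c'c uc'] := weight_child_rep hc vc wuv.
  have [hc' lc'] := hch c' c'c.
  by apply/bigcupP; exists c' => //; rewrite inE c'c (sound_l c' u).
apply: leq_trans (card_bigcup_le _ _) _; rewrite -sum_nat_const.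
apply/eq_leq/eq_bigr => c'; rewrite inE => /andP[c'c _].
by rewrite card_reps //; case: (hch c' c'c).
Qed.

Lemma fires_Blev l c v : has_reps c -> level c = l -> v \in reps c ->
  fire l v -> c \in Bl l.
Proof.
elim: l c v => [|l IH] c v hc lc vc; first exact: fires0_Blev0.
move=> /and3P[_ _ above_tau].
have [cC _] := children_in_level hc lc.
rewrite /= inE !inE cC lc eqxx /=.
apply: (threshold_ratio r1_le m_gt0); apply: (le_trans above_tau).
apply: le_trans (sum_bool_mul_le_card R _ _ (fire l)) _.
by rewrite ler_nat (card_active_inputs IH hc lc vc).
Qed.

End Soundness.

Theorem theorem7p4 (R : realType) (lmax n k m : nat)
  (D : finType) (level : D -> nat) (C : {set D}) (children : D -> {set D})
  (N : finType) (layer : N -> nat) (reps : D -> {set N}) (F : {set N})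
  (r1 r2 eps : R) :
  (0 < lmax)%N -> (0 < n)%N -> (0 < k)%N -> (0 < m)%N ->
  concept_hierarchy level lmax n k C children ->
  network_ok level layer lmax m C reps ->
  failure_ok level m eps C reps F ->
  0 <= r1 <= 1 -> 0 <= r2 <= 1 -> 0 <= eps <= 1 ->
  r1 <= r2 * (1 - eps) ->
  forall B : {set D}, B \subset C :&: Dlev level 0 ->
  forall c : D, has_reps level C c ->
  c \notin supp level lmax k C children r1 B ->
  forall v, v \in reps c ->
  ~~ fires level layer lmax k m C children reps F r2 eps B (level c) v.
Proof.
move=> _ _ _ m_gt0 [level_le _ _ children_ok _] [_ card_reps _ reps_disjoint] _ _ _ _ r1_le.
move=> B B_sub c hc c_supp v vc; apply: contra c_supp => fires_v.
have children_sub c' : c' \in C -> (1 <= level c' <= lmax)%N ->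
    children c' \subset C :&: Dlev level (level c').-1.
  by move=> c'C /(children_ok c' c'C)[].
apply: (subsetP (Blev_sub_supp _ _ _ _ _ _ (level_le c))).
exact: (fires_Blev level_le children_sub card_reps reps_disjoint B_sub m_gt0 r1_le
  hc erefl vc fires_v).
Qed.
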